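(* Let $0<\alpha\le1$, $\delta>0$ and $\bar u\in L^2(\Omega)^d$. For every integer $j\ge0$, the $j$-th Mitlar iterate $u_j$ computed from the data $\bar u$ satisfies $$u_j=D_\alpha\sum_{i=0}^{j}\big(\alpha D_\alpha(I-G)\big)^i\,\bar u .$$
   Context: Let $\Omega\subset\mathbb{R}^n$ be a regular, bounded, polyhedral domain, $d\ge1$, $X=H^1_0(\Omega)^d$, and $(\cdot,\cdot)$ the $L^2(\Omega)^d$ inner product. The differential filter $G:L^2(\Omega)^d\to X$ with filter radius $\delta>0$ is defined by $Gu=\bar u$, where $\bar u\in X$ is the unique solution of $\delta^2(\nabla\bar u,\nabla v)+(\bar u,v)=(u,v)$ for all $v\in X$; it is regarded as a bounded self-adjoint operator on $L^2(\Omega)^d$. For $\alpha\in(0,1]$ let $D_\alpha=[(1-\alpha)G+\alpha I]^{-1}$. Mitlar with data $\bar u$: $u_0$ solves $[(1-\alpha)G+\alpha I]u_0=\bar u$, and for $j\ge1$, $u_j$ solves $[(1-\alpha)G+\alpha I](u_j-u_{j-1})=\bar u-Gu_{j-1}$. *)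

From mathcomp Require Import all_boot all_order all_algebra.
Set Implicit Arguments. Unset Strict Implicit. Unset Printing Implicit Defensive.
Import Order.TTheory GRing.Theory Num.Theory.
Local Open Scope ring_scope.

Definition Mop (R : realFieldType) (V : lmodType R) (alpha : R)
  (G : V -> V) (v : V) : V :=
  (1 - alpha) *: G v + alpha *: v.

Definition is_Dalpha (R : realFieldType) (V : lmodType R) (alpha : R)
  (G : V -> V) (D : V -> V) : Prop :=
  cancel D (Mop alpha G) /\ cancel (Mop alpha G) D.

Definition is_mitlar (R : realFieldType) (V : lmodType R) (alpha : R)
  (G : V -> V) (ubar : V) (u : nat -> V) : Prop :=
  Mop alpha G (u 0%N) = ubar /\
  forall j : nat, Mop alpha G (u j.+1 - u j) = ubar - G (u j).

Definition Top (R : realFieldType) (V : lmodType R) (alpha : R)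
  (G D : V -> V) (v : V) : V :=
  alpha *: D (v - G v).

(* Both (1 - alpha) G + alpha I and its inverse D are linear and commute with G,
   so D itself commutes with G and alpha D (I - G) = I - G D.  Hence the residual
   r_j = ubar - G u_j of the Mitlar iteration obeys r_(j+1) = r_j - G D r_j, i.e.
   it is the (j+1)-st power of alpha D (I - G) applied to ubar, while
   u_(j+1) = u_j + D r_j; summing these increments gives the formula. *)
From HB Require Import structures.
From mathcomp Require Import all_boot all_order all_algebra.
Import Order.TTheory GRing.Theory Num.Theory.
Local Open Scope ring_scope.

Section MitlarIteration.

Variables (R : realFieldType) (V : lmodType R) (alpha : R) (G : {linear V -> V}).

Lemma Mop_is_linear : linear (Mop alpha G).
Proof.
move=> a x y; rewrite /Mop linearP !scalerDr !scalerA addrACA.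
by rewrite mulrC [alpha * a]mulrC.
Qed.

HB.instance Definition _ :=
  GRing.isLinear.Build R V V *:%R (Mop alpha G) Mop_is_linear.

Lemma Mop_G_comm x : G (Mop alpha G x) = Mop alpha G (G x).
Proof. by rewrite /Mop linearD !linearZ. Qed.

Variable D : V -> V.
Hypothesis hD : is_Dalpha alpha G D.

Lemma Dalpha_is_linear : linear D.
Proof. by case: hD => DK MK; exact: can2_linear MK DK. Qed.

HB.instance Definition _ :=
  GRing.isLinear.Build R V V *:%R D Dalpha_is_linear.

Lemma Dalpha_G_comm x : D (G x) = G (D x).
Proof.
case: hD => DK MK.
by rewrite -{1}[x]DK Mop_G_comm MK.
Qed.

Lemma Top_residual x : Top alpha G D x = x - G (D x).
Proof.
case: hD => DK _.
rewrite /Top [D _]linearB /= Dalpha_G_comm scalerBr.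
apply/esym; rewrite -{1}[x]DK /Mop scalerBl scale1r.
by rewrite addrAC [_ - _ - G _]addrAC subrr sub0r addrC.
Qed.

Variables (ubar : V) (u : nat -> V).
Hypothesis hu : is_mitlar alpha G ubar u.

Lemma mitlar_init : u 0%N = D ubar.
Proof. by case: hD => _ MK; case: hu => <- _; rewrite MK. Qed.

Lemma mitlar_step j : u j.+1 = u j + D (ubar - G (u j)).
Proof.
case: hD => _ MK; case: hu => _ huS.
by rewrite -huS MK addrC subrK.
Qed.

Lemma mitlar_residual j : ubar - G (u j) = iter j.+1 (Top alpha G D) ubar.
Proof.
elim: j => [|j IH]; first by rewrite mitlar_init /= Top_residual.
by rewrite mitlar_step linearD opprD addrA IH -Top_residual.
Qed.

Lemma mitlar_closed_form j :
  u j = D (\sum_(i < j.+1) iter i (Top alpha G D) ubar).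
Proof.
elim: j => [|j IH]; first by rewrite big_ord1 mitlar_init.
by rewrite mitlar_step mitlar_residual IH [in RHS]big_ord_recr [in RHS]linearD.
Qed.

End MitlarIteration.

Theorem mainTheorem4 (R : realFieldType) (V : lmodType R)
  (G : {linear V -> V}) (D : V -> V) (alpha : R)
  (halpha0 : 0 < alpha) (halpha1 : alpha <= 1)
  (hD : is_Dalpha alpha G D)
  (ubar : V) (u : nat -> V) (hu : is_mitlar alpha G ubar u) :
  forall j : nat,
    u j = D (\sum_(i < j.+1) iter i (Top alpha G D) ubar).
Proof.
(* The bounds on alpha only guarantee that D exists; here D is given by hD. *)
exact: mitlar_closed_form.
Qed.
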